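(* Let $(H,d)$ be an Hadamard space, i.e. a complete CAT(0) space. Then $\operatorname{Curv} H\leq 0$.
   Context: A CAT(0) space is a geodesic metric space $(X,d)$ such that for every $z\in X$, every geodesic $\gamma\colon[0,1]\to X$ (i.e. $d(\gamma(s),\gamma(t))=d(\gamma(0),\gamma(1))|s-t|$) and every $t\in[0,1]$: $d(z,\gamma(t))^2\le (1-t)d(z,\gamma(0))^2+t\,d(z,\gamma(1))^2-t(1-t)d(\gamma(0),\gamma(1))^2$. For a metric space $(X,d)$, a triangle is a triple $(a_1,a_2,a_3)$ of points of $X$; a comparison triangle is a triple $(\bar a_1,\bar a_2,\bar a_3)$ in the Euclidean plane $\mathbb{R}^2$ with $\|\bar a_i-\bar a_j\|=d(a_i,a_j)$ for all $i,j$ (unique up to isometry). The circumradius of the triangle is $r(a_1,a_2,a_3)=\inf_{x\in X}\max_{i=1,2,3}d(x,a_i)$, and $r(\bar a_1,\bar a_2,\bar a_3)=\min_{x\in\mathbb{R}^2}\max_{i}\|x-\bar a_i\|$. We write $\operatorname{Curv} X\le 0$ if for every triangle $(a_1,a_2,a_3)$ in $X$ one has $r(a_1,a_2,a_3)\le r(\bar a_1,\bar a_2,\bar a_3)$ for a comparison triangle $(\bar a_1,\bar a_2,\bar a_3)$. *)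

From mathcomp Require Import all_boot all_order all_algebra.
From mathcomp Require Import boolp classical_sets reals.
Set Implicit Arguments. Unset Strict Implicit. Unset Printing Implicit Defensive.
Import Order.TTheory GRing.Theory Num.Theory.
Local Open Scope ring_scope.
Local Open Scope classical_set_scope.

Section Defs.
Variable R : realType.

Definition is_metric (X : Type) (d : X -> X -> R) : Prop :=
  (forall x y, 0 <= d x y) /\
  (forall x y, d x y = 0 <-> x = y) /\
  (forall x y, d x y = d y x) /\
  (forall x y z, d x z <= d x y + d y z).

Definition is_geodesic (X : Type) (d : X -> X -> R) (gamma : R -> X) : Prop :=
  forall s t, 0 <= s <= 1 -> 0 <= t <= 1 ->
    d (gamma s) (gamma t) = d (gamma 0) (gamma 1) * `|s - t|.

Definition geodesic_space (X : Type) (d : X -> X -> R) : Prop :=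
  is_metric d /\
  forall x y, exists gamma : R -> X,
    is_geodesic d gamma /\ gamma 0 = x /\ gamma 1 = y.

Definition CAT0 (X : Type) (d : X -> X -> R) : Prop :=
  geodesic_space d /\
  forall (z : X) (gamma : R -> X), is_geodesic d gamma ->
    forall t, 0 <= t <= 1 ->
      d z (gamma t) ^+ 2 <=
        (1 - t) * d z (gamma 0) ^+ 2 + t * d z (gamma 1) ^+ 2
        - t * (1 - t) * d (gamma 0) (gamma 1) ^+ 2.

Definition complete_metric (X : Type) (d : X -> X -> R) : Prop :=
  forall u : nat -> X,
    (forall e : R, 0 < e -> exists N : nat, forall m n : nat,
        (N <= m)%N -> (N <= n)%N -> d (u m) (u n) < e) ->
    exists l : X, forall e : R, 0 < e -> exists N : nat, forall n : nat,
        (N <= n)%N -> d (u n) l < e.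

Definition Hadamard (X : Type) (d : X -> X -> R) : Prop :=
  CAT0 d /\ complete_metric d.

Definition max3 (a b c : R) : R := Num.max a (Num.max b c).

Definition circumradius (X : Type) (d : X -> X -> R) (a1 a2 a3 : X) : R :=
  inf [set max3 (d x a1) (d x a2) (d x a3) | x in [set: X]].

Definition eucl (p q : R * R) : R :=
  Num.sqrt ((p.1 - q.1) ^+ 2 + (p.2 - q.2) ^+ 2).

Definition circumradius2 (b1 b2 b3 : R * R) : R := circumradius eucl b1 b2 b3.

Definition curv_nonpos (X : Type) (d : X -> X -> R) : Prop :=
  forall (a1 a2 a3 : X) (b1 b2 b3 : R * R),
    eucl b1 b2 = d a1 a2 -> eucl b1 b3 = d a1 a3 -> eucl b2 b3 = d a2 a3 ->
    circumradius d a1 a2 a3 <= circumradius2 b1 b2 b3.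

End Defs.

(* Fix a point p of the plane at maximal distance M from the comparison
   vertices b_i.  For weights l_i >= 0 summing to 1, the Euclidean identity
   gives sum l_i l_j |b_i - b_j|^2 <= sum l_i |p - b_i|^2 <= M^2, while in a
   CAT(0) space going from a_1 towards a point of the geodesic [a_2, a_3]
   produces x with sum l_i d(a_i, x)^2 <= sum l_i l_j d(a_i, a_j)^2.  Hence
   every convex combination of the three functions d(a_i, .)^2 takes a value
   below M^2 + e.  These functions are convex along geodesics, so a minimax
   argument yields a single x with all d(a_i, x) <= M + e. *)
From mathcomp Require Import all_boot all_order all_algebra.
From mathcomp Require Import boolp classical_sets reals.
From mathcomp Require Import ring lra.
Set Implicit Arguments. Unset Strict Implicit. Unset Printing Implicit Defensive.
Import Order.TTheory GRing.Theory Num.Theory.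
Local Open Scope ring_scope.
Local Open Scope classical_set_scope.

Section MinimaxTwo.
Variables (R : realType) (T : Type) (f g : T -> R) (a : R).
Hypothesis convex_fg : forall x y t, 0 <= t <= 1 -> exists z,
  f z <= (1 - t) * f x + t * f y /\ g z <= (1 - t) * g x + t * g y.

(* If g exceeds a wherever f does not, then a point z between x and y with
   f z = a forces this inequality between the slopes through x and y. *)
Lemma sublevel_slope_le :
  (forall x, f x <= a -> a < g x) ->
  forall x y, a < f x -> f y < a ->
  (a - g x) / (f x - a) <= (g y - a) / (a - f y).
Proof.
move=> gt_g x y fx_gt fy_lt.
pose A := f x - a; pose B := a - f y.
have A_gt0 : 0 < A by rewrite /A; lra.
have B_gt0 : 0 < B by rewrite /B; lra.
have AB_gt0 : 0 < A + B by lra.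
pose t := B / (A + B).
have t01 : 0 <= t <= 1.
  apply/andP; split; first by apply: divr_ge0; lra.
  by rewrite /t ler_pdivrMr // mul1r; lra.
have combE (h : T -> R) :
    (1 - t) * h y + t * h x = (A * h y + B * h x) / (A + B).
  by rewrite /t; field; lra.
have [z [fz gz]] := convex_fg y x t01.
rewrite combE in fz; rewrite combE in gz.
have fz_le : f z <= a.
  by apply: (le_trans fz); rewrite ler_pdivrMr // /A /B; lra.
have : a < (A * g y + B * g x) / (A + B) by apply: lt_le_trans (gt_g z fz_le) gz.
rewrite ltr_pdivlMr // => ga.
rewrite ler_pdivrMr // mulrAC ler_pdivlMr //.
rewrite /A /B in ga A_gt0 B_gt0 *; nra.
Qed.

Lemma minimax_two :
  (forall mu, 0 <= mu <= 1 -> exists x, mu * f x + (1 - mu) * g x < a) ->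
  exists x, f x <= a /\ g x <= a.
Proof.
move=> comb_lt; apply: contrapT => no_common.
have gt_g x : f x <= a -> a < g x.
  by move=> fx; rewrite ltNge; apply/negP => gx; apply: no_common; exists x.
have [y0 y0_lt] := comb_lt 1 ltac:(lra).
have fy0 : f y0 < a by lra.
(* k = sup of the slopes on the side f > a; the combination with weights
   k/(1+k), 1/(1+k) is then everywhere >= a. *)
pose S := [set l | exists2 x, a < f x & l = (a - g x) / (f x - a)] `|` [set 0].
have ubS y : f y < a -> ubound S ((g y - a) / (a - f y)).
  move=> fy l [[x fx ->]|->]; first exact: sublevel_slope_le.
  by apply: divr_ge0; [have := gt_g y (ltW fy) | ]; lra.
have hasubS : has_ubound S by exists ((g y0 - a) / (a - f y0)); exact: ubS.
pose k := sup S.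
have k_ge0 : 0 <= k by apply: ub_le_sup => //; right.
have comb_ge x : (1 + k) * a <= k * f x + g x.
  have [fx|fx|fx] := ltgtP a (f x).
  - have : (a - g x) / (f x - a) <= k by apply: ub_le_sup => //; left; exists x.
    by rewrite ler_pdivrMr; [nra | lra].
  - have : k <= (g x - a) / (a - f x) by apply: ge_sup; [exists 0; right | exact: ubS].
    by rewrite ler_pdivlMr; [nra | lra].
  - by have := gt_g x; rewrite -fx lexx => /(_ isT); nra.
have [x x_lt] := comb_lt (k / (1 + k)) ltac:(apply/andP; split;
  [apply: divr_ge0; lra | rewrite ler_pdivrMr; lra]).
have weightE : 1 - k / (1 + k) = 1 / (1 + k) by field; lra.
rewrite weightE in x_lt.
have : k * f x + g x < (1 + k) * a.
  have -> : k * f x + g x = (k / (1 + k) * f x + 1 / (1 + k) * g x) * (1 + k).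
    by field; lra.
  by rewrite mulrC ltr_pM2l //; lra.
by have := comb_ge x; lra.
Qed.

End MinimaxTwo.

Section MinimaxThree.
Variables (R : realType) (T : Type) (f1 f2 f3 : T -> R).
Hypothesis convex_f : forall x y t, 0 <= t <= 1 -> exists z,
  [/\ f1 z <= (1 - t) * f1 x + t * f1 y, f2 z <= (1 - t) * f2 x + t * f2 y
    & f3 z <= (1 - t) * f3 x + t * f3 y].

(* Apply [minimax_two] to (f1, max f2 f3); each of its hypotheses is again an
   instance of [minimax_two], for (mu f1 + (1-mu) f2, mu f1 + (1-mu) f3).  The
   gap V1 < V2 absorbs the passage from strict to weak inequalities. *)
Lemma minimax_three (V1 V2 : R) : V1 < V2 ->
  (forall l1 l2 l3, 0 <= l1 -> 0 <= l2 -> 0 <= l3 -> l1 + l2 + l3 = 1 ->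
     exists x, l1 * f1 x + l2 * f2 x + l3 * f3 x < V1) ->
  exists x, [/\ f1 x <= V2, f2 x <= V2 & f3 x <= V2].
Proof.
move=> V12 comb_lt.
have [x [f1x]] : exists x, f1 x <= V2 /\ Num.max (f2 x) (f3 x) <= V2.
  apply: minimax_two.
    move=> x y t t01; have [z [z1 z2 z3]] := convex_f x y t01; exists z; split => //.
    have le_max23 w : f2 w <= Num.max (f2 w) (f3 w) /\ f3 w <= Num.max (f2 w) (f3 w).
      by rewrite !le_max !lexx orbT.
    have [x2 x3] := le_max23 x; have [y2 y3] := le_max23 y.
    by rewrite ge_max; apply/andP; split; nra.
  move=> mu mu01.
  have [x [f12x f13x]] : exists x, mu * f1 x + (1 - mu) * f2 x <= V1 /\
                                   mu * f1 x + (1 - mu) * f3 x <= V1.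
    apply: minimax_two.
      by move=> x y t t01; have [z [z1 z2 z3]] := convex_f x y t01; exists z; split; nra.
    move=> nu nu01.
    have [x x_lt] := comb_lt mu ((1 - mu) * nu) ((1 - mu) * (1 - nu))
      ltac:(lra) ltac:(nra) ltac:(nra) ltac:(ring).
    by exists x; nra.
  exists x; have [f23|f32] := leP (f2 x) (f3 x).
    have max23 : Num.max (f2 x) (f3 x) <= f3 x by rewrite ge_max f23 lexx.
    by nra.
  have max23 : Num.max (f2 x) (f3 x) <= f2 x by rewrite ge_max lexx (ltW f32).
  by nra.
by rewrite ge_max => /andP [f2x f3x]; exists x.
Qed.

End MinimaxThree.

Lemma max3_le (R : realType) (a b c e : R) :
  (max3 a b c <= e) = [&& a <= e, b <= e & c <= e].
Proof. by rewrite /max3 !ge_max. Qed.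

Section Euclidean.
Variable R : realType.

Lemma eucl_sq (p q : R * R) :
  eucl p q ^+ 2 = (p.1 - q.1) ^+ 2 + (p.2 - q.2) ^+ 2.
Proof. by rewrite /eucl sqr_sqrtr // addr_ge0 // sqr_ge0. Qed.

(* The difference of the two sides is |p - (l1 b1 + l2 b2 + l3 b3)|^2. *)
Lemma eucl_weighted_sqdist_ge (b1 b2 b3 p : R * R) (l1 l2 l3 : R) :
  l1 + l2 + l3 = 1 ->
  l1 * l2 * eucl b1 b2 ^+ 2 + l1 * l3 * eucl b1 b3 ^+ 2 + l2 * l3 * eucl b2 b3 ^+ 2
  <= l1 * eucl p b1 ^+ 2 + l2 * eucl p b2 ^+ 2 + l3 * eucl p b3 ^+ 2.
Proof.
move=> l_sum; rewrite !eucl_sq.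
have := sqr_ge0 (p.1 - (l1 * b1.1 + l2 * b2.1 + l3 * b3.1)).
have := sqr_ge0 (p.2 - (l1 * b1.2 + l2 * b2.2 + l3 * b3.2)).
have -> : l1 = 1 - l2 - l3 by lra.
lra.
Qed.

End Euclidean.

Section CAT0.
Variables (R : realType) (X : Type) (d : X -> X -> R).
Hypothesis catd : CAT0 d.

Let metric_d : is_metric d. Proof. by case: catd => [[]]. Qed.

Lemma CAT0_sqdist_convex z (g : R -> X) t : is_geodesic d g -> 0 <= t <= 1 ->
  d z (g t) ^+ 2 <= (1 - t) * d z (g 0) ^+ 2 + t * d z (g 1) ^+ 2.
Proof.
move=> geo_g t01; have := catd.2 z g geo_g t t01.
have : 0 <= t * (1 - t) * d (g 0) (g 1) ^+ 2 by apply: mulr_ge0; [nra | exact: sqr_ge0].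
lra.
Qed.

(* x lies at parameter l2 + l3 on the geodesic from a1 to the point at
   parameter l3 / (l2 + l3) of the geodesic from a2 to a3. *)
Lemma CAT0_weighted_sqdist_le (a1 a2 a3 : X) (l1 l2 l3 : R) :
  0 <= l1 -> 0 <= l2 -> 0 <= l3 -> l1 + l2 + l3 = 1 ->
  exists x, l1 * d a1 x ^+ 2 + l2 * d a2 x ^+ 2 + l3 * d a3 x ^+ 2 <=
    l1 * l2 * d a1 a2 ^+ 2 + l1 * l3 * d a1 a3 ^+ 2 + l2 * l3 * d a2 a3 ^+ 2.
Proof.
move=> l1_ge0 l2_ge0 l3_ge0 l_sum.
have [_ [dE [dC _]]] := metric_d.
have dxx x : d x x = 0 by apply/dE.
have [s0|s_neq0] := eqVneq (l2 + l3) 0.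
  have [-> ->] : l2 = 0 /\ l3 = 0 by lra.
  by exists a1; rewrite dxx; lra.
pose s := l2 + l3; pose t := l3 / s.
have s_gt0 : 0 < s by rewrite lt_neqAle eq_sym s_neq0 /s; lra.
have l3E : l3 = t * s by rewrite /t mulfVK.
have l2E : l2 = s * (1 - t) by rewrite mulrBr mulr1 [s * t]mulrC -l3E /s; lra.
have l1E : l1 = 1 - s by rewrite /s; lra.
have t01 : 0 <= t <= 1.
  by apply/andP; split; [apply: divr_ge0; lra | rewrite /t ler_pdivrMr // mul1r /s; lra].
have s01 : 0 <= s <= 1 by rewrite /s; apply/andP; split; lra.
have [g [geo_g [g0 g1]]] := catd.1.2 a2 a3.
have [h [geo_h [h0 h1]]] := catd.1.2 a1 (g t).
exists (h s).
have I1 := catd.2 a1 h geo_h s s01; rewrite h0 h1 dxx in I1.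
have I2 := catd.2 a2 h geo_h s s01; rewrite h0 h1 (dC a2 a1) in I2.
have I3 := catd.2 a3 h geo_h s s01; rewrite h0 h1 (dC a3 a1) in I3.
have J2 := catd.2 a2 g geo_g t t01; rewrite g0 g1 dxx in J2.
have J3 := catd.2 a3 g geo_g t t01; rewrite g0 g1 dxx (dC a3 a2) in J3.
have K1 := ler_wpM2l l1_ge0 I1.
have K2 := ler_wpM2l l2_ge0 I2.
have K3 := ler_wpM2l l3_ge0 I3.
have K4 := ler_wpM2l (mulr_ge0 l2_ge0 (ltW s_gt0)) J2.
have K5 := ler_wpM2l (mulr_ge0 l3_ge0 (ltW s_gt0)) J3.
rewrite l1E l2E l3E in K1 K2 K3 K4 K5 *.
lra.
Qed.

Lemma circumradius_le (a1 a2 a3 : X) (M : R) :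
  (forall e, 0 < e -> exists x, max3 (d x a1) (d x a2) (d x a3) <= M + e) ->
  circumradius d a1 a2 a3 <= M.
Proof.
move=> near_M; apply/ler_addgt0Pr => e e_gt0.
have [x x_le] := near_M e e_gt0.
apply: le_trans x_le; apply: ge_inf; last by exists x.
by exists 0 => _ [y _ <-]; rewrite /max3 !le_max metric_d.1.
Qed.

Lemma CAT0_curv_nonpos : curv_nonpos d.
Proof.
move=> a1 a2 a3 b1 b2 b3 e12 e13 e23.
apply: lb_le_inf; first by exists (max3 (eucl b1 b1) (eucl b1 b2) (eucl b1 b3)), b1.
move=> _ [p _ <-]; set M := max3 _ _ _.
have /and3P [pb1 pb2 pb3] : [&& eucl p b1 <= M, eucl p b2 <= M & eucl p b3 <= M].
  by rewrite -max3_le.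
have M_ge0 : 0 <= M by apply: le_trans pb1; exact: sqrtr_ge0.
apply: circumradius_le => e e_gt0.
have e2_gt0 : 0 < e ^+ 2 / 2 by apply: divr_gt0 => //; exact: exprn_gt0.
have [x [x1 x2 x3]] : exists x, [/\ d a1 x ^+ 2 <= (M + e) ^+ 2,
    d a2 x ^+ 2 <= (M + e) ^+ 2 & d a3 x ^+ 2 <= (M + e) ^+ 2].
  apply: (@minimax_three R X (fun x => d a1 x ^+ 2) (fun x => d a2 x ^+ 2)
    (fun x => d a3 x ^+ 2) _ (M ^+ 2 + e ^+ 2 / 2)).
  - move=> x y t t01; have [g [geo_g [g0 g1]]] := catd.1.2 x y; exists (g t).
    by rewrite -g0 -g1; split; exact: CAT0_sqdist_convex.
  - by nra.
  - move=> l1 l2 l3 l1_ge0 l2_ge0 l3_ge0 l_sum.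
    have [x x_le] := CAT0_weighted_sqdist_le a1 a2 a3 l1_ge0 l2_ge0 l3_ge0 l_sum.
    exists x; apply: (le_lt_trans x_le); rewrite -e12 -e13 -e23.
    apply: (le_lt_trans (eucl_weighted_sqdist_ge b1 b2 b3 p l_sum)).
    have sq_le b : eucl p b <= M -> eucl p b ^+ 2 <= M ^+ 2.
      by move=> pb; rewrite ler_sqr ?nnegrE //; exact: sqrtr_ge0.
    have := ler_wpM2l l1_ge0 (sq_le _ pb1); have := ler_wpM2l l2_ge0 (sq_le _ pb2).
    have := ler_wpM2l l3_ge0 (sq_le _ pb3); nra.
have [d_ge0 [_ [dC _]]] := metric_d.
have M_e_ge0 : 0 <= M + e by lra.
have le_of_sq y : d y x ^+ 2 <= (M + e) ^+ 2 -> d x y <= M + e.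
  by move=> sq_yx; rewrite dC -ler_sqr ?nnegrE ?d_ge0.
by exists x; rewrite max3_le; apply/and3P; split; exact: le_of_sq.
Qed.

End CAT0.

Theorem mainTheorem1 (R : realType) (H : Type) (d : H -> H -> R) :
  Hadamard d -> curv_nonpos d.
Proof. by case=> catd _; exact: CAT0_curv_nonpos. Qed.
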